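(* Let $(\Omega,\mathcal{F},P)=([0,1],\mathcal{B}([0,1]),\lambda)$ with $\lambda$ Lebesgue measure, and let $(\varepsilon_n)\subset(0,1)$ with $\varepsilon_n\to0$ be such that $E[S^n_1]=1$ for all $n$, where for each $n$ the process $S^n$ is given by $S^n_t=0$ for $t\in[0,1)$ and $S^n_1(\omega)=-\frac{1}{\sqrt{\omega}}$ on $[0,\varepsilon_n)$, $S^n_1(\omega)=\frac{1}{(1-\omega)^{1/(n+1)}}$ on $[\varepsilon_n,1]$; the filtration is the one generated by $(S^n)_{n\in\mathbb{N}}$. Then there exists an equivalent separating measure for $\mathcal{X}$ (namely $P=\lambda$ itself: $E_P[X_1]\le0$ for all $X\in\mathcal{X}$), but there is no equivalent martingale measure, i.e. no $Q\sim P$ with $E_Q[S^n_1]=0$ for all $n$.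
   Context: For this market, $\mathcal{X}^n_1$ denotes the set of stochastic integrals $(\mathbf{H}\bullet\mathbf{S}^n)$, $\mathbf{S}^n=(S^1,\dots,S^n)$, with $\mathbf{H}$ $\mathbb{R}^n$-valued predictable $\mathbf{S}^n$-integrable and $(\mathbf{H}\bullet\mathbf{S}^n)_t\ge-1$ for all $t$; $\mathcal{X}_1$ is the closure of $\bigcup_{n\ge1}\mathcal{X}^n_1$ in the Emery topology (metric $d_{\mathbb{S}}(X,Y)=\sup_{K}E[\sup_{t\le1}|(K\bullet(X-Y))_t|\wedge1]$ over simple predictable $K$, $\|K\|_\infty\le1$), and $\mathcal{X}=\bigcup_{\lambda>0}\lambda\mathcal{X}_1$. *)

From mathcomp Require Import all_boot all_order all_algebra.
From mathcomp Require Import all_classical all_reals all_analysis.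
Set Implicit Arguments. Unset Strict Implicit. Unset Printing Implicit Defensive.
Import Order.TTheory GRing.Theory Num.Theory.
Import numFieldNormedType.Exports.
Local Open Scope classical_set_scope.
Local Open Scope ring_scope.

Section Market.
Variable R : realType.

(* P = Lebesgue measure restricted to [0,1] (so P lives on [0,1]).         *)
Definition Omega := measurableTypeR R.

Definition Pm : {measure set Omega -> \bar R} :=
  mrestr (@lebesgue_measure R) (measurable_itv (`[0, 1] : interval R)).

Definition unit01 : set R := `[0, 1].

Definition process := R -> Omega -> R.

(* Terminal value S^{n+1}_1 of the paper (0-based index n corresponds to  *)
(* the paper's S^{n+1}); values outside [0,1] are irrelevant (P-null).     *)
Definition S1 (eps : nat -> R) (n : nat) (w : Omega) : R :=
  if (0 <= w) && (w < eps n) then - (Num.sqrt w)^-1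
  else if (eps n <= w) && (w <= 1) then ((1 - w) `^ (n.+2%:R)^-1)^-1
  else 0.

Definition S (eps : nat -> R) (n : nat) : process :=
  fun t w => if t < 1 then 0 else S1 eps n w.

Definition meas_wrt (G : set (set Omega)) (f : Omega -> R) :=
  forall B : set (measurableTypeR R), measurable B -> G (f @^-1` B).

Definition filt (eps : nat -> R) (t : R) : set (set Omega) :=
  <<s [set A | exists n s (B : set (measurableTypeR R)),
         [/\ s <= t, measurable B & A = S eps n s @^-1` B] ] >>.

Definition stopping_time (eps : nat -> R) (T : Omega -> R) :=
  (forall w, 0 <= T w <= 1) /\ forall t, filt eps t [set w | T w <= t].

Definition filt_at (eps : nat -> R) (T : Omega -> R) : set (set Omega) :=
  [set A | forall t, filt eps t (A `&` [set w | T w <= t])].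

(*   K = K0 1_{0} + sum_{i<m} Ki i 1_{(T i, T (i+1)]}                       *)
Record simple_pred (eps : nat -> R) := SimplePred {
  sp_m : nat;
  sp_T : nat -> Omega -> R;
  sp_K0 : Omega -> R;
  sp_K : nat -> Omega -> R;
  sp_T_stop : forall i, (i <= sp_m)%N -> stopping_time eps (sp_T i);
  sp_T_incr : forall i w, (i < sp_m)%N -> sp_T i w <= sp_T i.+1 w;
  sp_K0_meas : meas_wrt (filt eps 0) sp_K0;
  sp_K0_bd : forall w, `|sp_K0 w| <= 1;
  sp_K_meas : forall i, (i < sp_m)%N -> meas_wrt (filt_at eps (sp_T i)) (sp_K i);
  sp_K_bd : forall i w, `|sp_K i w| <= 1 }.

Definition simple_int (eps : nat -> R) (K : simple_pred eps) (Z : process)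
  : process := fun t w =>
  sp_K0 K w * Z 0 w +
  \sum_(i < sp_m K) sp_K K i w *
     (Z (Order.min (sp_T K i.+1 w) t) w - Z (Order.min (sp_T K i w) t) w).

Definition emery_dist (eps : nat -> R) (X Y : process) : \bar R :=
  ereal_sup [set (\int[Pm]_w
      (Order.min (ereal_sup [set (`| simple_int K (fun t w => X t w - Y t w) t w |)%:E
                              | t in unit01]) 1))%E
    | K in [set: simple_pred eps]].

Definition pred_rects (eps : nat -> R) : set (set (R * Omega)) :=
  [set C | (exists A, filt eps 0 A /\ C = [set 0] `*` A) \/
           (exists s t A, [/\ 0 <= s, s < t, t <= 1, filt eps s A &
                              C = `]s, t] `*` A])].

Definition predictable_sets (eps : nat -> R) : set (set (R * Omega)) :=
  <<s `[0, 1] `*` [set: Omega], pred_rects eps >>.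

Definition predictable (eps : nat -> R) (H : R -> Omega -> R) :=
  forall B : set (measurableTypeR R), measurable B ->
    predictable_sets eps
      ((`[0, 1] `*` [set: Omega]) `&` [set p | B (H p.1 p.2)]).

(* Each S^k has finite-variation paths (constant 0 on [0,1), one jump of    *)
(* size S^k_1 at time 1), so the stochastic integral is the pathwise       *)
(* Lebesgue-Stieltjes integral, and every predictable H is S^n-integrable.  *)
Definition stoch_int (eps : nat -> R) (n : nat) (H : 'I_n -> R -> Omega -> R)
  : process := fun t w =>
  if t < 1 then 0 else \sum_(k < n) H k 1 w * S1 eps k w.

Definition calX1n (eps : nat -> R) (n : nat) (X : process) :=
  exists H : 'I_n -> R -> Omega -> R,
    [/\ forall k, predictable eps (H k),
        (forall t w, t \in `[0, 1] -> X t w = stoch_int eps H t w) &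
        {ae Pm, forall w, forall t, t \in `[0, 1] -> -1 <= X t w}].

Definition adapted_cadlag (eps : nat -> R) (X : process) :=
  (forall t, t \in `[0, 1] -> meas_wrt (filt eps t) (X t)) /\
  forall w : Omega,
    (forall t, 0 <= t -> t < 1 -> (fun s => X s w) @ at_right t --> X t w) /\
    (forall t, 0 < t -> t <= 1 -> cvg ((fun s => X s w) @ at_left t)).

Definition calX1 (eps : nat -> R) (X : process) :=
  adapted_cadlag eps X /\
  exists Y : nat -> process,
    (forall j, exists n, calX1n eps n (Y j)) /\
    emery_dist eps (Y j) X @[j --> \oo] --> 0%E.

Definition calX (eps : nat -> R) (X : process) :=
  exists lam : R, 0 < lam /\ exists X1, calX1 eps X1 /\
    forall t w, t \in `[0, 1] -> X t w = lam * X1 t w.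

Definition equiv_prob (Q : probability Omega R) :=
  forall A : set Omega, measurable A -> (Q A = 0%E <-> Pm A = 0%E).

Definition is_EMM (eps : nat -> R) (Q : probability Omega R) :=
  equiv_prob Q /\
  forall n, Q.-integrable [set: Omega] (fun w => (S eps n 1 w)%:E) /\
            (\int[Q]_w (S eps n 1 w)%:E = 0)%E.

End Market.

From mathcomp Require Import all_boot all_order all_algebra.
From mathcomp Require Import all_classical all_reals all_analysis.
From mathcomp Require Import measurable_realfun lra.
Import Order.TTheory GRing.Theory Num.Theory.
Import numFieldNormedType.Exports.
Local Open Scope classical_set_scope.
Local Open Scope ring_scope.

(* Before time 1 every S^n vanishes, so the natural filtration is trivial there,
   a predictable integrand is deterministic at time 1, and every element of
   X^n_1 ends at sum_k c_k S^k_1.  Near w = 0 this equals -(sum_k c_k)/sqrt w,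
   so admissibility (>= -1) forces sum_k c_k <= 0: the P-mean is nonpositive
   since E_P[S^k_1] = 1.  Emery convergence implies convergence in probability
   of terminal values (take K = 1 on (0,1]); for limits in probability of
   variables bounded below by -1 with nonpositive means, the mean of the limit
   clamped to [-L, M] stays nonpositive, and monotone convergence in M removes
   the upper clamp.
   Conversely |S^n_1| >= 1 on (0,1) and |S^n_1| = S^n_1 + 2 (S^n_1)^-, so under
   a martingale measure Q ~ P the negative part (S^n_1)^-, which is w^(-1/2) on
   [0, eps_n), has Q-mean >= 1/2; but it tends to 0 pointwise, dominated by
   |S^0_1| + eps_0^(-1/2), so its Q-mean tends to 0. *)

Lemma smallest_preimage_trivial (U V : Type) (D : set U) (phi : V -> U)
    (G : set (set U)) :
  phi @^-1` D = setT ->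
  (forall C, G C -> phi @^-1` C = set0 \/ phi @^-1` C = setT) ->
  forall C, <<s D, G >> C -> phi @^-1` C = set0 \/ phi @^-1` C = setT.
Proof.
move=> phiD phiG.
suff sigma : sigma_algebra D [set C | phi @^-1` C = set0 \/ phi @^-1` C = setT].
  by move=> C; exact: smallest_sub sigma phiG C.
split => /=.
- by left; rewrite preimage_set0.
- move=> A [A0|AT].
    right; apply/seteqP; split => // x _; split.
      by have : (phi @^-1` D) x by rewrite phiD.
    by move=> Ax; have : (phi @^-1` A) x by []; rewrite A0.
  left; apply/seteqP; split => // x /= [_]; apply.
  by have : (phi @^-1` A) x by rewrite AT.
- move=> A A01; rewrite preimage_bigcup.
  have [[k Ak]|noT] := pselect (exists k, phi @^-1` A k = setT).
    by right; apply/seteqP; split => // x _; exists k => //; rewrite Ak.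
  left; apply/seteqP; split => // x [k _ Akx].
  case: (A01 k) => Ak; first by have : (phi @^-1` A k) x by []; rewrite Ak.
  by exfalso; apply: noT; exists k.
Qed.

Lemma pos_lower_bound {R : realDomainType} (u : nat -> R) (n : nat) :
  (forall k, 0 < u k) -> exists2 m, 0 < m & forall k, (k < n)%N -> m <= u k.
Proof.
move=> u_gt0; elim: n => [|n [m m0 mu]]; first by exists 1.
exists (Num.min m (u n)); first by rewrite lt_min m0 u_gt0.
move=> k; rewrite ltnS leq_eqVlt => /orP[/eqP->|kn]; first by rewrite ge_min lexx orbT.
by rewrite ge_min mu.
Qed.

Definition clamp {R : realDomainType} (lo hi x : R) := Num.max (Num.min x hi) lo.

Section Clamp.
Variables (R : realDomainType) (L M : R).
Hypotheses (L_gt0 : 0 < L) (M_ge0 : 0 <= M).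

Lemma norm_clamp_le (x : R) : `|clamp (- L) M x| <= M + L.
Proof.
have lo : - L <= clamp (- L) M x by rewrite le_max lexx orbT.
have hi : clamp (- L) M x <= M.
  by rewrite ge_max ge_min lexx orbT (le_trans _ M_ge0) // oppr_le0 ltW.
rewrite ler_norml; apply/andP; split.
  by rewrite (le_trans _ lo) // lerN2 lerDr.
by rewrite (le_trans hi) // lerDl ltW.
Qed.

Lemma clamp_le_max_dist (a y : R) :
  clamp (- L) M (L * a) <= L * Num.max y (-1) + (M + L) * Num.min `|y - a| 1.
Proof.
set yc := Num.max y (-1).
have yc_ge : -1 <= yc by rewrite le_max lexx orbT.
have y_le : y <= yc by rewrite le_max lexx.
have Lyc_ge : - L <= L * yc by rewrite -mulrN1 ler_wpM2l // ltW.
have Ly_le : L * y <= L * yc by rewrite ler_wpM2l // ltW.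
have dist_ge0 : 0 <= Num.min `|y - a| 1 by rewrite le_min normr_ge0 ler01.
have dist_term_ge0 : 0 <= (M + L) * Num.min `|y - a| 1 by rewrite mulr_ge0 // addr_ge0 // ltW.
rewrite /clamp ge_max; apply/andP; split; last by lra.
have [ya_le1|ya_gt1] := leP `|y - a| 1; last by rewrite ge_min; apply/orP; right; lra.
have La_le : L * a <= L * y + L * `|y - a|.
  rewrite -mulrDr ler_wpM2l ?(ltW L_gt0) //.
  by have := ler_norm (a - y); rewrite distrC; lra.
have Mdist_ge0 : 0 <= M * `|y - a| by rewrite mulr_ge0.
by rewrite ge_min; apply/orP; left; rewrite mulrDl; lra.
Qed.

Lemma clamp_split (u : R) :
  clamp (- L) M u = Num.min (Num.max u 0) M - Num.min (Num.max (- u) 0) L.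
Proof.
rewrite /clamp; have [u_ge0|u_lt0] := leP 0 u.
  rewrite (@max_r _ _ (- u) 0) ?oppr_le0 // (@min_l _ _ 0 L) ?ltW // subr0.
  by apply: max_l; rewrite le_min (le_trans _ u_ge0) ?(le_trans _ M_ge0) // oppr_le0 ltW.
rewrite (@min_l _ _ 0 M) // sub0r (@max_l _ _ (- u) 0) ?oppr_ge0 ?ltW //.
rewrite (@min_l _ _ u M) ?(le_trans (ltW u_lt0)) //.
have [uL|uL] := leP (- u) L; first by rewrite opprK; apply: max_l; rewrite lerNl.
by apply: max_r; rewrite lerNr ltW.
Qed.

End Clamp.

Lemma le0_of_le_scaled_cvg0 {R : realType} (c x : R) (e : nat -> \bar R) :
  0 < c -> (forall j, x%:E <= c%:E * e j)%E -> e j @[j --> \oo] --> 0%E -> x <= 0.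
Proof.
move=> c_gt0 xe e0; rewrite leNgt; apply/negP => x_gt0.
have xc_le j : ((x / c)%:E <= e j)%E.
  have := xe j; case: (e j) => [r| |]; last by rewrite mulrNy gtr0_sg // mul1e leeNy_eq.
  - by rewrite -EFinM !lee_fin ler_pdivrMr // mulrC.
  - by rewrite leey.
have : ((x / c)%:E <= 0)%E by apply: cvge_to_ge e0 _; exact: nearW.
by rewrite lee_fin leNgt divr_gt0.
Qed.

Section FiniteMeasure.
Context {R : realType} {d : measure_display} {T : measurableType d}.
Variable mu : {measure set T -> \bar R}.
Hypothesis mu_fin : (mu setT < +oo)%E.

Lemma ge0_le_integral_nomeas (f g : T -> \bar R) :
  (forall x, 0 <= f x)%E -> (forall x, f x <= g x)%E ->
  (\int[mu]_x f x <= \int[mu]_x g x)%E.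
Proof.
move=> f0 fg; rewrite !ge0_integralTE //; last by move=> x; exact: le_trans (f0 x) (fg x).
by apply: ereal_sup_le => _ [h hf <-]; exists h => //= x; exact: le_trans (hf x) (fg x).
Qed.

Lemma bounded_integrable (f : T -> R) (B : R) : measurable_fun setT f ->
  (forall x, `|f x| <= B) -> mu.-integrable setT (fun x => (f x)%:E).
Proof.
move=> mf fB; apply/integrableP; split; first exact/measurable_EFinP.
apply: (@le_lt_trans _ _ (\int[mu]_x (cst B%:E x))%E).
  apply: ge0_le_integral => //.
  - by apply/measurable_EFinP; apply: measurableT_comp => //; exact: normr_measurable.
  - by move=> x _; rewrite lee_fin fB.
rewrite integral_cst //; apply: lte_mul_pinfty => //.
by rewrite lee_fin (le_trans (normr_ge0 (f point)) (fB point)).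
Qed.

Lemma clamp_integral_le_dist (L M : R) (g Y : T -> R) :
  0 < L -> 0 <= M -> measurable_fun setT g ->
  mu.-integrable setT (fun w => (Y w)%:E) -> (\int[mu]_w (Y w)%:E <= 0)%E ->
  {ae mu, forall w, -1 <= Y w} ->
  (\int[mu]_w (clamp (- L) M (L * g w))%:E <=
     (M + L)%:E * \int[mu]_w (Order.min (`|Y w - g w|)%:E 1))%E.
Proof.
move=> L_gt0 M_ge0 mg iY Y_le0 Y_ge.
have mY : measurable_fun setT Y by have /integrableP[/measurable_EFinP] := iY.
set Yc := fun w => Num.max (Y w) (-1).
have mYc : measurable_fun setT Yc by apply: measurable_maxr.
have Yc_ae : (\int[mu]_w (Yc w)%:E = \int[mu]_w (Y w)%:E)%E.
  apply: ae_eq_integral => //; [exact/measurable_EFinP|exact/measurable_EFinP|].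
  by apply: filterS Y_ge => w Yw _; rewrite /Yc max_l.
have iYc : mu.-integrable setT (fun w => (Yc w)%:E).
  apply: (@le_integrable _ _ _ _ _ _ _ (fun w => (`|Y w| + 1)%:E)) => //.
  - exact/measurable_EFinP.
  - move=> w _; rewrite !abse_EFin lee_fin [leRHS]ger0_norm ?addr_ge0 //.
    have := ler_norm (Y w); have := ler_norm (- Y w); rewrite normrN /Yc /=.
    by case: (leP (Y w) (-1)) => *; rewrite ler_norml; apply/andP; split; lra.
  - under eq_fun do rewrite EFinD.
    apply: integrableD => //; first exact: (integrable_abse iY).
    by apply: (@bounded_integrable (cst 1) 1) => // x; rewrite normr1.
set k := fun w => Num.min `|Y w - g w| 1.
have mk : measurable_fun setT k.
  apply: measurable_minr => //; apply: measurableT_comp; first exact: normr_measurable.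
  exact: measurable_funB.
have ik : mu.-integrable setT (fun w => (k w)%:E).
  apply: (@bounded_integrable _ 1) => // w; rewrite /k ger0_norm.
    by rewrite ge_min lexx orbT.
  by rewrite le_min normr_ge0 ler01.
have scaled_int (c : R) (f : T -> R) : mu.-integrable setT (fun w => (f w)%:E) ->
    mu.-integrable setT (fun w => (c * f w)%:E).
  by move=> if_; under eq_fun do rewrite EFinM; exact: integrableZl.
have scaled_integral (c : R) (f : T -> R) : mu.-integrable setT (fun w => (f w)%:E) ->
    (\int[mu]_w (c * f w)%:E = c%:E * \int[mu]_w (f w)%:E)%E.
  by move=> if_; under eq_integral do rewrite EFinM; exact: integralZl.
have mclamp : measurable_fun setT (fun w => clamp (- L) M (L * g w)).
  by apply: measurable_maxr => //; apply: measurable_minr => //; exact: measurable_funM.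
have iclamp : mu.-integrable setT (fun w => (clamp (- L) M (L * g w))%:E).
  by apply: (@bounded_integrable _ (M + L)) => // w; exact: norm_clamp_le.
apply: (@le_trans _ _ (\int[mu]_w ((L * Yc w)%:E + ((M + L) * k w)%:E))%E).
  apply: le_integral => //; first by apply: integrableD => //; exact: scaled_int.
  by move=> w _; rewrite -EFinD lee_fin; exact: clamp_le_max_dist.
rewrite integralD //; try exact: scaled_int.
rewrite !scaled_integral // Yc_ae.
rewrite (_ : \int[mu]_w (k w)%:E = \int[mu]_w (Order.min (`|Y w - g w|)%:E 1))%E; last first.
  by apply: eq_integral => w _; rewrite /k EFin_min.
by rewrite -[leRHS]add0e leeD2r // mule_ge0_le0 // lee_fin ltW.
Qed.

Lemma integral_funepos_le (u : T -> R) (c : \bar R) : measurable_fun setT u ->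
  (forall M : nat, (\int[mu]_w (Num.min (Num.max (u w) 0) M%:R)%:E <= c)%E) ->
  (\int[mu]_w ((fun w => (u w)%:E)^\+ w) <= c)%E.
Proof.
move=> meas_u trunc_le.
set p := fun (M : nat) w => Num.min (Num.max (u w) 0) M%:R.
have mp M : measurable_fun setT (p M) by apply: measurable_minr => //; exact: measurable_maxr.
have p_ge0 M w : 0 <= p M w by rewrite le_min le_max lexx orbT ler0n.
have p_nd w : {homo (fun M => (p M w)%:E) : m n / (m <= n)%N >-> (m <= n)%E}.
  by move=> m n mn; rewrite lee_fin le_min ge_min lexx /= ge_min ler_nat mn orbT.
have p_cvg := @cvg_monotone_convergence _ _ _ mu _ measurableT (fun M w => (p M w)%:E)
  (fun M => (measurable_EFinP _ _).2 (mp M)) (fun M w _ => p_ge0 M w) (fun w _ => p_nd w).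
have p_lim w : limn (fun M => (p M w)%:E) = ((fun w => (u w)%:E)^\+ w)%E.
  rewrite funeposE /= -EFin_max; apply: cvg_lim => //.
  apply: (cvg_near_cst (Num.max (u w) 0)%:E).
  exists (Num.truncn (Num.max (u w) 0)).+1 => // n /= hn.
  by rewrite /p min_l // (le_trans (ltW (truncnS_gt _))) // ler_nat.
under eq_integral do rewrite -p_lim.
rewrite -(cvg_lim _ p_cvg) //; apply: lime_le; first exact: cvgP p_cvg.
exact: nearW.
Qed.

Section L0Limit.
Variables (g : T -> R) (Y : nat -> T -> R) (e : nat -> \bar R).
Hypotheses (mg : measurable_fun setT g)
  (iY : forall j, mu.-integrable setT (fun w => (Y j w)%:E))
  (Y_le0 : forall j, (\int[mu]_w (Y j w)%:E <= 0)%E)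
  (Y_ge : forall j, {ae mu, forall w, -1 <= Y j w})
  (dist_le : forall j, (\int[mu]_w (Order.min (`|Y j w - g w|)%:E 1) <= e j)%E)
  (e0 : e j @[j --> \oo] --> 0%E).

Lemma clamp_integral_le0 (L M : R) : 0 < L -> 0 <= M ->
  (\int[mu]_w (clamp (- L) M (L * g w))%:E <= 0)%E.
Proof.
move=> L_gt0 M_ge0; have ML_gt0 : 0 < M + L by rewrite ltr_wpDl.
have mclamp : measurable_fun setT (fun w => clamp (- L) M (L * g w)).
  by apply: measurable_maxr => //; apply: measurable_minr => //; exact: measurable_funM.
have iclamp : mu.-integrable setT (fun w => (clamp (- L) M (L * g w))%:E).
  by apply: (@bounded_integrable _ (M + L)) => // w; exact: norm_clamp_le.
have clamp_fin := integrable_fin_num measurableT iclamp.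
rewrite -(fineK clamp_fin) lee_fin.
apply: (le0_of_le_scaled_cvg0 _ _ _ ML_gt0 _ e0) => j; rewrite fineK //.
apply: le_trans (clamp_integral_le_dist _ _ _ _ L_gt0 M_ge0 mg
  (iY j) (Y_le0 j) (Y_ge j)) _.
by rewrite lee_wpmul2l // lee_fin ltW.
Qed.

Lemma L0_limit_integral_le0 (L : R) : 0 < L -> (\int[mu]_w (L * g w)%:E <= 0)%E.
Proof.
move=> L_gt0; set u := fun w => L * g w.
have meas_u : measurable_fun setT u by exact: measurable_funM.
set q := fun w => Num.min (Num.max (- u w) 0) L.
have mq : measurable_fun setT q.
  by apply: measurable_minr => //; apply: measurable_maxr => //; exact: measurable_funN.
have iq : mu.-integrable setT (fun w => (q w)%:E).
  apply: (@bounded_integrable _ L) => // w; rewrite ger0_norm ?ge_min ?lexx ?orbT //.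
  by rewrite le_min le_max lexx orbT ltW.
have q_le_neg : (\int[mu]_w (q w)%:E <= \int[mu]_w ((fun w => (u w)%:E)^\-) w)%E.
  apply: ge0_le_integral => //.
  - by move=> w _; rewrite lee_fin le_min le_max lexx orbT ltW.
  - exact/measurable_EFinP.
  - by apply: measurable_funeneg; exact/measurable_EFinP.
  - by move=> w _; rewrite funenegE /= -EFin_max lee_fin ge_min lexx.
rewrite integralE sube_le0 (le_trans _ q_le_neg) //.
apply: integral_funepos_le => // M.
have ip : mu.-integrable setT (fun w => (Num.min (Num.max (u w) 0) M%:R)%:E).
  apply: (@bounded_integrable _ M%:R) => [|w].
    by apply: measurable_minr => //; exact: measurable_maxr.
  by rewrite ger0_norm ?ge_min ?lexx ?orbT // le_min le_max lexx orbT ler0n.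
have := clamp_integral_le0 L M%:R L_gt0 (ler0n _ M).
under eq_integral do rewrite clamp_split ?ler0n // EFinB.
by rewrite (integralB measurableT ip iq) sube_le0.
Qed.

End L0Limit.

End FiniteMeasure.

Section Market.
Variables (R : realType) (eps : nat -> R).

Lemma one_in01 : (1 : R) \in `[0, 1]. Proof. by rewrite in_itv /= lexx ler01. Qed.

Lemma filt_lt1_trivial {t : R} {A : set (Omega R)} : t < 1 -> filt eps t A ->
  A = set0 \/ A = setT.
Proof.
move=> t1 fA; have := @smallest_preimage_trivial _ _ setT id _ erefl _ A fA.
rewrite !preimage_id; apply => C [n [s [B [st mB ->]]]].
have -> : S eps n s = fun=> 0 by apply/funext => w; rewrite /S (le_lt_trans st t1).
have [B0|nB0] := pselect (B 0); [right|left]; by apply/seteqP; split.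
Qed.

Lemma predictable_at1_cst {H : R -> Omega R -> R} : predictable eps H ->
  forall w, H 1 w = H 1 0.
Proof.
move=> pH w; set at1 := fun w : Omega R => (1 : R, w).
set C := (`[0, 1] `*` [set: Omega R]) `&` [set p | [set H 1 0] (H p.1 p.2)].
have : at1 @^-1` C = set0 \/ at1 @^-1` C = setT.
  apply: (@smallest_preimage_trivial _ _ (`[0, 1] `*` [set: Omega R]) at1 _ _ _ _
    (pH _ (measurable_set1 (H 1 0)))).
  - by apply/seteqP; split => // x _; rewrite /= one_in01.
  - move=> _ [[A [_ ->]]|[s [t [A [s0 st t1 fA ->]]]]].
      by left; apply/seteqP; split => // x /= [/eqP]; rewrite oner_eq0.
    have [->|->] := filt_lt1_trivial (lt_le_trans st t1) fA.
      by left; apply/seteqP; split => // x /= [].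
    have [st1|nst1] := pselect (`]s, t]%classic (1 : R)); [right|left];
      by apply/seteqP; split => // x /= [].
case=> C1.
  have : (at1 @^-1` C) 0 by split => //; split => //=; exact: one_in01.
  by rewrite C1.
by have [_ ->] : (at1 @^-1` C) w by rewrite C1.
Qed.

Lemma calX1n_terminal n Y : calX1n eps n Y -> exists c : 'I_n -> R,
  (forall w, Y 1 w = \sum_(k < n) c k * S1 eps k w) /\ {ae Pm R, forall w, -1 <= Y 1 w}.
Proof.
move=> [H [pH YH Y_ge]]; exists (fun k => H k 1 0); split.
  move=> w; rewrite YH ?one_in01 // /stoch_int ltxx.
  by apply: eq_bigr => k _; rewrite (predictable_at1_cst (pH k)).
by apply: filterS Y_ge => w /(_ 1 one_in01).
Qed.

Lemma Pm_setT : Pm R setT = 1%E.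
Proof. by rewrite /Pm /= /mrestr setTI lebesgue_measure_itv /= lte_fin ltr01 oppr0 adde0. Qed.

Lemma Pm_itv (a b : R) : 0 <= a -> b <= 1 ->
  Pm R `]a, b[%classic = (if a < b then (b - a)%:E else 0%E).
Proof.
move=> a0 b1; rewrite /Pm /= /mrestr.
rewrite (_ : _ `&` _ = `]a, b[%classic).
  by rewrite lebesgue_measure_itv /=; case: ifP => //; rewrite lte_fin.
apply/seteqP; split => x /=; first by case.
move=> ax; split => //; move: ax; rewrite !in_itv /= => /andP[ax xb].
by rewrite (le_trans a0 (ltW ax)) (le_trans (ltW xb) b1).
Qed.

Lemma Pm_outside01 : Pm R (~` `]0%R, 1%R[%classic) = 0%E.
Proof.
set A := `]0%R, 1%R[%classic.
have mA : measurable A by exact: measurable_itv.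
have : (Pm R setT = Pm R A + Pm R (~` A))%E.
  by rewrite -measureU ?setUv ?setICr //; exact: measurableC.
have : (Pm R (~` A) <= 1)%E.
  by rewrite -Pm_setT le_measure ?inE //; exact: measurableC.
have := measure_ge0 (Pm R) (~` A).
rewrite Pm_setT Pm_itv // ltr01 subr0.
case: (Pm R (~` A)) => [r _ _| |] //=; rewrite -EFinD => /eqP; rewrite eqe => /eqP r0.
by congr (_%:E); lra.
Qed.

Lemma filt_cst t (P : Prop) : filt eps t [set _ : Omega R | P].
Proof.
have [p|np] := pselect P; last first.
  by rewrite (_ : [set _ | P] = set0); [exact: sigma_algebra0|apply/seteqP; split].
rewrite (_ : [set _ | P] = setT `\` set0); last by rewrite setD0; apply/seteqP; split.
exact: (sigma_algebraCD (@sigma_algebra0 _ _ _)).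
Qed.

Definition hold_time (i : nat) (_ : Omega R) : R := if i == 0%N then 0 else 1.

Lemma hold_time_stopping i : stopping_time eps (hold_time i).
Proof.
split=> [w|t]; last exact: (filt_cst t (hold_time i 0 <= t)).
by rewrite /hold_time; case: ifP; rewrite lexx ler01.
Qed.

Lemma hold_time_nondecr i w : (i < 1)%N -> hold_time i w <= hold_time i.+1 w.
Proof. by rewrite /hold_time /=; case: ifP; rewrite ?ler01 ?lexx. Qed.

Lemma meas_wrt_cst t (x : R) : meas_wrt (filt eps t) (fun _ => x).
Proof. by move=> B _; exact: filt_cst. Qed.

Lemma meas_wrt_hold_cst i (x : R) : meas_wrt (filt_at eps (hold_time i)) (fun _ => x).
Proof.
move=> B _ t; rewrite (_ : _ `&` _ = [set _ | B x /\ hold_time i 0 <= t]).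
  exact: filt_cst.
by apply/seteqP; split => w /=.
Qed.

Lemma norm1_le1 : `|1 : R| <= 1. Proof. by rewrite normr1. Qed.

Definition hold_strategy : simple_pred eps :=
  @SimplePred R eps 1 hold_time (fun _ => 1) (fun _ _ => 1)
    (fun i _ => hold_time_stopping i) hold_time_nondecr (meas_wrt_cst 0 1)
    (fun _ => norm1_le1) (fun i _ => meas_wrt_hold_cst i 1) (fun _ _ => norm1_le1).

Lemma simple_int_hold (Z : process R) w : simple_int hold_strategy Z 1 w = Z 1 w.
Proof.
rewrite /simple_int /= big_ord_recl big_ord0 /hold_time /= addr0 !mul1r.
by rewrite /Order.min /= ltxx ltr01 addrC subrK.
Qed.

Lemma emery_dist_ge (X Y : process R) :
  (\int[Pm R]_w (Order.min (`|Y 1 w - X 1 w|)%:E 1) <= emery_dist eps Y X)%E.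
Proof.
apply: le_trans; last by apply: ereal_sup_ubound; exists hold_strategy.
apply: (ge0_le_integral_nomeas (Pm R)) => w; first by rewrite le_min lee_fin normr_ge0 lee01.
rewrite le_min; apply/andP; split; last by rewrite ge_min lexx orbT.
rewrite ge_min; apply/orP; left.
apply: ereal_sup_ubound; exists 1; first by rewrite /unit01 /= one_in01.
by rewrite simple_int_hold.
Qed.

Hypothesis heps : forall n, 0 < eps n < 1.
Hypothesis hint : forall n, (Pm R).-integrable setT (fun w => (S1 eps n w)%:E).

Lemma measurable_S1 n : measurable_fun setT (S1 eps n).
Proof. by have /integrableP[/measurable_EFinP] := hint n. Qed.

Lemma filt_measurable t A : filt eps t A -> measurable A.
Proof.
apply: (smallest_sub (@sigma_algebra_measurable _ (Omega R))).
move=> _ [n [s [B [_ mB ->]]]]; rewrite /S; have [s1|_] := ltP s 1.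
  have [B0|nB0] := pselect (B 0); [rewrite (_ : _ @^-1` _ = setT)|rewrite (_ : _ @^-1` _ = set0)];
    by [|apply/seteqP; split].
rewrite (_ : _ @^-1` _ = S1 eps n @^-1` B); last by apply/seteqP; split.
by rewrite -[X in measurable X]setTI; exact: measurable_S1.
Qed.

Lemma meas_wrt_measurable t f : meas_wrt (filt eps t) f -> measurable_fun setT f.
Proof. by move=> ft _ B mB; rewrite setTI; apply: (@filt_measurable t); exact: ft. Qed.

Lemma S1_near0 n w : 0 <= w -> w < eps n -> S1 eps n w = - (Num.sqrt w)^-1.
Proof. by move=> w0 wn; rewrite /S1 w0 wn. Qed.

Lemma coef_sum_le0 n (c : 'I_n -> R) :
  {ae Pm R, forall w, -1 <= \sum_(k < n) c k * S1 eps k w} -> \sum_(k < n) c k <= 0.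
Proof.
move=> [N [mN PN0 subN]]; rewrite leNgt; apply/negP => s_gt0.
set s := \sum_(k < n) c k in s_gt0.
have [m m_gt0 m_le] := pos_lower_bound eps n (fun k => (andP (heps k)).1).
(* On (0, r) every S^k_1 with k < n equals -w^(-1/2), and -s w^(-1/2) < -1. *)
set r := Num.min (Num.min m (s ^+ 2)) (1/2 : R).
have r_gt0 : 0 < r by rewrite !lt_min m_gt0 exprn_gt0 //= divr_gt0.
have r_le1 : r <= 1 by rewrite ge_min ler_pdivrMr // mul1r ler1n orbT.
suff : `]0%R, r[%classic `<=` N.
  move=> r_sub; have : (Pm R `]0%R, r[%classic <= Pm R N)%E.
    by apply: le_measure => //; rewrite inE //; exact: measurable_itv.
  by rewrite PN0 Pm_itv // r_gt0 lee_fin subr0 leNgt r_gt0.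
move=> w; rewrite /= in_itv /= => /andP[w_gt0 w_lt]; apply: subN => /=.
have sqrtw_lt : Num.sqrt w < s.
  rewrite -(gtr0_norm s_gt0) -sqrtr_sqr ltr_sqrt ?exprn_gt0 //.
  by apply: lt_le_trans w_lt _; rewrite /r !ge_min lexx orbT.
have -> : \sum_(k < n) c k * S1 eps k w = - (s / Num.sqrt w).
  rewrite /s mulr_suml -sumrN; apply: eq_bigr => k _.
  rewrite S1_near0 ?mulrN // ?ltW //; apply: lt_le_trans w_lt _.
  by rewrite /r !ge_min (m_le k (ltn_ord k)).
by rewrite lerN2 ler_pdivrMr ?sqrtr_gt0 // mul1r leNgt sqrtw_lt.
Qed.

Hypothesis hmean : forall n, (\int[Pm R]_w (S1 eps n w)%:E = 1)%E.

Lemma integral_comb_S1 n (c : 'I_n -> R) :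
  (Pm R).-integrable setT (fun w => (\sum_(k < n) c k * S1 eps k w)%:E) /\
  (\int[Pm R]_w (\sum_(k < n) c k * S1 eps k w)%:E = (\sum_(k < n) c k)%:E)%E.
Proof.
have -> : (fun w => (\sum_(k < n) c k * S1 eps k w)%:E) =
    (fun w => \sum_(k < n) (c k)%:E * (S1 eps k w)%:E)%E.
  by apply/funext => w; rewrite -sumEFin.
have ic k : (Pm R).-integrable setT (fun w => (c k)%:E * (S1 eps k w)%:E)%E.
  exact: integrableZl.
split; first exact: integrable_sum.
rewrite integral_sum // -sumEFin; apply: eq_bigr => k _.
by rewrite integralZl // hmean mule1.
Qed.

Lemma calX1n_terminal_mean_le0 {n Y} : calX1n eps n Y ->
  [/\ (Pm R).-integrable setT (fun w => (Y 1 w)%:E),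
      (\int[Pm R]_w (Y 1 w)%:E <= 0)%E & {ae Pm R, forall w, -1 <= Y 1 w}].
Proof.
move=> /calX1n_terminal[c [/funext-> Y_ge]].
have [ic ->] := integral_comb_S1 n c.
by split=> //; rewrite lee_fin; exact: coef_sum_le0.
Qed.

Lemma calX_mean_le0 (X : process R) : calX eps X -> (\int[Pm R]_w (X 1 w)%:E <= 0)%E.
Proof.
move=> [lam [lam_gt0 [X1 [[[X1_adapted _] [Y [Y_in dist_cvg]]] XE]]]].
have mX1 : measurable_fun setT (X1 1) by apply: (meas_wrt_measurable 1); exact: X1_adapted one_in01.
have Pm_fin : (Pm R setT < +oo)%E by rewrite Pm_setT ltry.
have Y_facts j := let: ex_intro n Yn := Y_in j in calX1n_terminal_mean_le0 Yn.
rewrite (eq_integral (fun w => (lam * X1 1 w)%:E)); last by move=> w _; rewrite XE ?one_in01.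
apply: (L0_limit_integral_le0 (Pm R) Pm_fin (X1 1) (fun j => Y j 1) _ mX1 _ _ _ _ dist_cvg lam lam_gt0).
- by move=> j; case: (Y_facts j).
- by move=> j; case: (Y_facts j).
- by move=> j; case: (Y_facts j).
- by move=> j; exact: emery_dist_ge.
Qed.

Definition S1_neg n (w : Omega R) : R := Num.max (- S1 eps n w) 0.

Lemma S1_negE n w :
  S1_neg n w = if (0 <= w) && (w < eps n) then (Num.sqrt w)^-1 else 0.
Proof.
rewrite /S1_neg /S1; case: ifP => _; first by rewrite opprK max_l // invr_ge0 sqrtr_ge0.
by case: ifP => _; rewrite ?oppr0 ?maxxx // max_r // oppr_le0 invr_ge0 powR_ge0.
Qed.

Lemma measurable_S1_neg n : measurable_fun setT (S1_neg n).
Proof. by apply: measurable_maxr => //; apply: measurable_funN; exact: measurable_S1. Qed.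

Lemma norm_S1E n w : `|S1 eps n w| = S1 eps n w + 2 * S1_neg n w.
Proof.
rewrite /S1_neg; have [S0|S0] := leP 0 (S1 eps n w).
  by rewrite ger0_norm // max_r ?oppr_le0 // mulr0 addr0.
by rewrite ltr0_norm // max_l ?oppr_ge0 ?ltW //; lra.
Qed.

Lemma one_le_norm_S1_indic n w :
  1 <= `|S1 eps n w| + \1_(~` `]0%R, 1%R[%classic) w.
Proof.
rewrite indicE; have [w01|w01] := boolP (w \in ~` `]0%R, 1%R[%classic).
  by rewrite addrC lerDl.
rewrite addr0; move: w01; rewrite in_setC negbK => /set_mem.
rewrite /= in_itv /= => /andP[w_gt0 w_lt1].
have [en_gt0 _] := andP (heps n).
rewrite /S1 (ltW w_gt0) /=; case: ifPn => [w_lt|].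
  have sqrt_gt0 : 0 < Num.sqrt w by rewrite sqrtr_gt0.
  have : 1 <= (Num.sqrt w)^-1 :> R by rewrite invf_ge1 // -sqrtr1 ler_sqrt // ltW.
  by rewrite normrN ger0_norm ?invr_ge0 ?sqrtr_ge0.
rewrite -leNgt => en_le; rewrite en_le (ltW w_lt1) /=.
have pw_gt0 : 0 < (1 - w) `^ (n.+2%:R)^-1 by rewrite powR_gt0 // subr_gt0.
have : 1 <= ((1 - w) `^ (n.+2%:R)^-1)^-1 :> R.
  rewrite invf_ge1 // -[leRHS](powRr0 (1 - w)) ger_powR ?invr_ge0 //.
  by rewrite subr_gt0 w_lt1 /= lerBlDr lerDl ltW.
by rewrite ger0_norm // invr_ge0 ltW.
Qed.

Lemma S1_neg_le n w : S1_neg n w <= `|S1 eps 0 w| + (Num.sqrt (eps 0))^-1.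
Proof.
have [e0_gt0 _] := andP (heps 0).
have sqrt_ge0 : 0 <= (Num.sqrt (eps 0))^-1 by rewrite invr_ge0 sqrtr_ge0.
rewrite S1_negE; case: ifPn => [/andP[w_ge0 _]|_]; last by rewrite addr_ge0.
have [w_lt|e0_le] := ltP w (eps 0).
  by rewrite S1_near0 // normrN ger0_norm ?invr_ge0 ?sqrtr_ge0 // lerDl.
apply: (@le_trans _ _ (Num.sqrt (eps 0))^-1); last by rewrite lerDr normr_ge0.
rewrite lef_pV2 ?ler_sqrt //.
  by rewrite posrE sqrtr_gt0 (lt_le_trans e0_gt0).
by rewrite posrE sqrtr_gt0.
Qed.

Hypothesis heps0 : eps n @[n --> \oo] --> 0.

Lemma S1_neg_near0 w : \forall n \near \oo, S1_neg n w = 0.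
Proof.
have [w_le0|w_gt0] := leP w 0.
  apply: nearW => n; rewrite S1_negE; case: ifPn => // /andP[w_ge0 _].
  by rewrite (@le_anti _ _ w 0) ?w_le0 ?w_ge0 // sqrtr0 invr0.
near=> n; rewrite S1_negE ifF //; apply/negbTE; rewrite negb_and -leNgt orbC.
by apply/orP; left; apply: ltW; near: n; exact: (cvgr_lt 0 heps0 w w_gt0).
Unshelve. all: by end_near.
Qed.

Section MartingaleMeasure.
Variable Q : probability (Omega R) R.
Hypothesis Q_S1_int : forall n, Q.-integrable setT (fun w => (S1 eps n w)%:E).

Let Q_fin : (Q setT < +oo)%E. Proof. by rewrite probability_setT ltry. Qed.

Lemma integrable_S1_neg n : Q.-integrable setT (fun w => (S1_neg n w)%:E).
Proof.
apply: (le_integrable _ _ _ (integrable_abse (Q_S1_int n))) => //.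
  by apply/measurable_EFinP; exact: measurable_S1_neg.
move=> w _ /=; rewrite normr_id lee_fin /S1_neg ger0_norm; last first.
  by rewrite le_max lexx orbT.
by rewrite ge_max normr_ge0 andbT -normrN ler_norm.
Qed.

Lemma S1_neg_integral_ge n :
  Q (~` `]0%R, 1%R[%classic) = 0%E -> (\int[Q]_w (S1 eps n w)%:E = 0)%E ->
  ((1/2 : R)%:E <= \int[Q]_w (S1_neg n w)%:E)%E.
Proof.
set A := ~` `]0%R, 1%R[%classic => QA0 ES1.
have mA : measurable A by apply: measurableC; exact: measurable_itv.
have iA : Q.-integrable setT (fun w => (\1_A w)%:E).
  apply: (bounded_integrable Q Q_fin _ 1) => [|w]; first exact: measurable_indic.
  by rewrite indicE; case: (_ \in _); rewrite ?normr1 ?normr0.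
have i2S1_neg : Q.-integrable setT (fun w => (2 * S1_neg n w)%:E).
  by under eq_fun do rewrite EFinM; exact/integrableZl/integrable_S1_neg.
have : (\int[Q]_w (cst 1%E w) <=
    \int[Q]_w ((S1 eps n w)%:E + (2 * S1_neg n w)%:E + (\1_A w)%:E))%E.
  apply: le_integral => //.
  - exact: finite_measure_integrable_cst.
  - by apply: integrableD => //; exact: integrableD.
  - by move=> w _; rewrite -!EFinD -norm_S1E lee_fin one_le_norm_S1_indic.
rewrite integral_cst // [X in (X <= _)%E -> _](_ : _ = 1%E); last first.
  by rewrite mul1e; exact: probability_setT.
rewrite integralD //; last exact: integrableD.
rewrite integralD // ES1 add0e integral_indic // setIT.
rewrite [X in (_ <= _ + X)%E -> _](_ : _ = 0%E) ?adde0; last exact: QA0.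
under eq_integral do rewrite EFinM.
rewrite integralZl //; last exact: integrable_S1_neg.
have := integrable_fin_num measurableT (integrable_S1_neg n).
case: (\int[Q]_w _)%E => // r _; rewrite -EFinM !lee_fin => r_ge.
by rewrite ler_pdivrMr // mulrC.
Qed.

Lemma S1_neg_integral_cvg0 : (\int[Q]_w (S1_neg n w)%:E)%E @[n --> \oo] --> 0%E.
Proof.
set G := fun w => `|S1 eps 0 w| + (Num.sqrt (eps 0))^-1.
have iG : Q.-integrable setT (fun w => (G w)%:E).
  rewrite /G; under eq_fun do rewrite EFinD.
  apply: integrableD => //; first exact: integrable_abse (Q_S1_int 0).
  exact: finite_measure_integrable_cst.
have := @dominated_cvg _ _ _ Q setT measurableT (fun n w => (S1_neg n w)%:E)
  (fun=> 0%E) (fun w => (G w)%:E)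
  (fun n => (measurable_EFinP _ _).2 (measurable_S1_neg n)).
rewrite integral0; apply => //.
- by move=> w _; apply: cvg_near_cst; apply: filterS (S1_neg_near0 w) => n ->.
- move=> n w _; rewrite abse_EFin lee_fin ger0_norm ?S1_neg_le //.
  by rewrite le_max lexx orbT.
Qed.

End MartingaleMeasure.

Lemma no_EMM : ~ exists Q : probability (Omega R) R, is_EMM eps Q.
Proof.
move=> [Q [Q_equiv Q_mart]].
have S_at1 n : (fun w => (S eps n 1 w)%:E) = (fun w => (S1 eps n w)%:E).
  by apply/funext => w; rewrite /S ltxx.
have Q_S1_int n : Q.-integrable setT (fun w => (S1 eps n w)%:E).
  by rewrite -S_at1; case: (Q_mart n).
have QA0 : Q (~` `]0%R, 1%R[%classic) = 0%E.
  by apply/(Q_equiv _ _).2; [apply: measurableC; exact: measurable_itv|exact: Pm_outside01].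
have : ((1/2 : R)%:E <= 0)%E.
  apply: cvge_to_ge (S1_neg_integral_cvg0 Q Q_S1_int) _; apply: nearW => n.
  by apply: (S1_neg_integral_ge Q Q_S1_int) => //; rewrite -S_at1; case: (Q_mart n).
by rewrite lee_fin leNgt divr_gt0.
Qed.

End Market.

Theorem proposition6p4 (R : realType) (eps : nat -> R)
  (heps : forall n, 0 < eps n < 1)
  (heps0 : eps n @[n --> \oo] --> 0)
  (hint : forall n, (Pm R).-integrable [set: Omega R] (fun w => (S1 eps n w)%:E))
  (hmean : forall n, (\int[Pm R]_w (S1 eps n w)%:E = 1)%E) :
  (forall X : process R, calX eps X -> (\int[Pm R]_w (X 1 w)%:E <= 0)%E) /\
  ~ (exists Q : probability (Omega R) R, is_EMM eps Q).
Proof.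
split; first exact: calX_mean_le0.
exact: no_EMM.
Qed.
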